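(* Let $(O,m_0)$ be an occurrence net with its initial marking $m_0$. For every marking $m$: $(\overleftarrow O,m_0)\to^*(\overleftarrow O,m)$ if and only if $(\overleftarrow O,m_0)\rightharpoonup^*(\overleftarrow O,m)$, where $\to^*$ denotes a finite sequence of forward and/or backward firings and $\rightharpoonup^*$ a finite sequence of forward firings only.
   Context: A net has places, transitions, and nonempty preset/postset sets ${}^\bullet\mathsf t,\mathsf t^\bullet$ for each transition; markings are multisets of places; firing rule: if ${}^\bullet\mathsf t=m$, $\mathsf t^\bullet=m'$ then $(N,m\oplus m'')\xrightarrow{\mathsf t}(N,m'\oplus m'')$. With $\prec=\{(a,\mathsf t)\mid a\in{}^\bullet\mathsf t\}\cup\{(\mathsf t,a)\mid a\in\mathsf t^\bullet\}$ and $\preceq$ its reflexive-transitive closure, an occurrence net is a marked net $(O,m_0)$ with $\prec$ acyclic, every reachable marking a set, $m_0=\{a\mid{}^\bullet a=\emptyset\}$, $|{}^\bullet a|\le1$ for all places ${}^\bullet a=\{\mathsf t\mid a\in\mathsf t^\bullet\}$, and no transition $\mathsf t$ with $\mathsf t\#\mathsf t$ (where $x\#y$ iff there are distinct-or-not transitions $\mathsf t_1\preceq x,\mathsf t_2\preceq y$ with $\mathsf t_1\neq\mathsf t_2$ and ${}^\bullet\mathsf t_1\cap{}^\bullet\mathsf t_2\ne\emptyset$). The reversible version $\overleftarrow O$ has the same places, transitions $T_O\cup\{\underline{\mathsf t}\mid\mathsf t\in T_O\}$, forward transitions keep their pre/postsets, and ${}^\bullet\underline{\mathsf t}=\mathsf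 t^\bullet$, $\underline{\mathsf t}^\bullet={}^\bullet\mathsf t$. Firings of forward transitions $\mathsf t\in T_O$ are forward firings ($\rightharpoonup$), of reverse transitions backward firings. *)

From Stdlib Require Import Relations Arith.

Section Nets.
Variables (P T : Type).

Inductive star {A : Type} (R : A -> A -> Prop) : A -> A -> Prop :=
| star_refl : forall x, star R x x
| star_step : forall x y z, R x y -> star R y z -> star R x z.

Definition fire {Tr : Type} (pre post : Tr -> P -> bool) (t : Tr) (m1 m2 : P -> nat) : Prop :=
  exists m'' : P -> nat,
    (forall a, m1 a = Nat.b2n (pre t a) + m'' a) /\
    (forall a, m2 a = Nat.b2n (post t a) + m'' a).

Definition step (pre post : T -> P -> bool) (m1 m2 : P -> nat) : Prop :=
  exists t, fire pre post t m1 m2.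

(* flow relation on places (inl) and transitions (inr) *)
Definition prec (pre post : T -> P -> bool) (x y : P + T) : Prop :=
  match x, y with
  | inl a, inr t => pre t a = true
  | inr t, inl a => post t a = true
  | _, _ => False
  end.

Definition preceq pre post := clos_refl_trans (P + T) (prec pre post).

Definition conflict (pre post : T -> P -> bool) (x y : P + T) : Prop :=
  exists t1 t2 : T, t1 <> t2 /\ preceq pre post (inr t1) x /\
    preceq pre post (inr t2) y /\ exists a, pre t1 a = true /\ pre t2 a = true.

Definition is_net (pre post : T -> P -> bool) : Prop :=
  (forall t, exists a, pre t a = true) /\ (forall t, exists a, post t a = true).

Definition occurrence_net (pre post : T -> P -> bool) (m0 : P -> nat) : Prop :=
  is_net pre post /\
  (forall x, ~ clos_trans (P + T) (prec pre post) x x) /\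
  (forall m, star (step pre post) m0 m -> forall a, m a <= 1) /\
  (* m0 = { a | preset of a empty } *)
  (forall a, (m0 a = 1 /\ forall t, post t a = false) \/
             (m0 a = 0 /\ exists t, post t a = true)) /\
  (forall a t1 t2, post t1 a = true -> post t2 a = true -> t1 = t2) /\
  (forall t, ~ conflict pre post (inr t) (inr t)).

(* reversible version: transitions inl t (forward) and inr t (reverse) *)
Definition rpre (pre post : T -> P -> bool) (u : T + T) : P -> bool :=
  match u with inl t => pre t | inr t => post t end.
Definition rpost (pre post : T -> P -> bool) (u : T + T) : P -> bool :=
  match u with inl t => post t | inr t => pre t end.

Definition rstep pre post (m1 m2 : P -> nat) : Prop :=
  exists u : T + T, fire (rpre pre post) (rpost pre post) u m1 m2.

Definition fstep pre post (m1 m2 : P -> nat) : Prop :=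
  exists t : T, fire (rpre pre post) (rpost pre post) (inl t) m1 m2.

End Nets.

Arguments fire {P Tr} pre post t m1 m2.
Arguments step {P T} pre post m1 m2.
Arguments prec {P T} pre post x y.
Arguments preceq {P T} pre post.
Arguments conflict {P T} pre post x y.
Arguments is_net {P T} pre post.
Arguments occurrence_net {P T} pre post m0.
Arguments rpre {P T} pre post u.
Arguments rpost {P T} pre post u.
Arguments rstep {P T} pre post m1 m2.
Arguments fstep {P T} pre post m1 m2.

(** The forward-reachable markings are closed under backward firings, by
    induction on the length of a forward firing sequence.  Nothing can be
    undone at [m0]: every postset is nonempty and a produced place is not
    initially marked.  If [m1 -t1-> m] and the reverse of [t] is enabled at
    [m], then either [t = t1] and undoing it returns to [m1], or [t <> t1]:
    as a place has at most one producer, the postsets of [t] and [t1] are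
    disjoint, so the two firings are independent and commute, and undoing
    [t] already at [m1] is covered by the induction hypothesis. *)

From Stdlib Require Import Relations Arith Lia FunctionalExtensionality Classical.

Section Star.
Variables (A : Type) (R : A -> A -> Prop).

Lemma star_snoc x y z : star R x y -> R y z -> star R x z.
Proof.
  induction 1 as [x|x y' y Hxy _ IH]; intro Hyz.
  - apply star_step with z; [exact Hyz | apply star_refl].
  - apply star_step with y'; auto.
Qed.

Lemma star_rtn1_iff x y : star R x y <-> clos_refl_trans_n1 A R x y.
Proof.
  rewrite <- clos_rt_rtn1_iff, clos_rt_rt1n_iff.
  split; intro Hxy; induction Hxy; econstructor; eauto.
Qed.

Lemma star_closed (Q : A -> Prop) x y :
  Q x -> (forall y z, Q y -> R y z -> Q z) -> star R x y -> Q y.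
Proof. intros Hx HQ Hxy; induction Hxy; eauto. Qed.

Lemma star_mono (S : A -> A -> Prop) x y :
  (forall x y, R x y -> S x y) -> star R x y -> star S x y.
Proof. intros HRS Hxy; induction Hxy; econstructor; eauto. Qed.

End Star.

Section Firing.
Variables (P Tr : Type) (pre post : Tr -> P -> bool).

Lemma fire_pre_le u m m' a : fire pre post u m m' -> pre u a = true -> 1 <= m a.
Proof. intros [k [Hm _]] Ha; rewrite Hm, Ha; simpl; lia. Qed.

Lemma fire_functional u m m1 m2 :
  fire pre post u m m1 -> fire pre post u m m2 -> m1 = m2.
Proof.
  intros [k1 [Hm1 Hm1']] [k2 [Hm2 Hm2']]; extensionality a.
  specialize (Hm1 a); specialize (Hm2 a); rewrite Hm1', Hm2'; lia.
Qed.

Lemma fire_commute u v m1 m m' :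
  (forall a, pre v a = true -> post u a = false) ->
  fire pre post u m1 m -> fire pre post v m m' ->
  exists m2, fire pre post v m1 m2 /\ fire pre post u m2 m'.
Proof.
  intros Hdisj [k [Hm1 Hm]] [k' [Hm' Hm'']].
  set (c a := k a - Nat.b2n (pre v a)).
  assert (Hk : forall a, k a = Nat.b2n (pre v a) + c a /\
                         k' a = Nat.b2n (post u a) + c a).
  { intro a; unfold c; specialize (Hm a); specialize (Hm' a);
      specialize (Hdisj a).
    destruct (pre v a), (post u a); simpl in *; try discriminate
      (Hdisj eq_refl); lia. }
  exists (fun a => Nat.b2n (pre u a) + Nat.b2n (post v a) + c a); split.
  - exists (fun a => Nat.b2n (pre u a) + c a); split; intro a;
      [rewrite Hm1, (proj1 (Hk a)) | ]; lia.
  - exists (fun a => Nat.b2n (post v a) + c a); split; intro a;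
      [ | rewrite Hm'', (proj2 (Hk a))]; lia.
Qed.

End Firing.

Lemma fire_reverse (P T : Type) (pre post : T -> P -> bool) t m m' :
  fire (rpre pre post) (rpost pre post) (inr t) m m' ->
  fire (rpre pre post) (rpost pre post) (inl t) m' m.
Proof. intros [k [Hm Hm']]; exists k; split; assumption. Qed.

Section Reversible.
Variables (P T : Type) (pre post : T -> P -> bool) (m0 : P -> nat).
Hypothesis post_nonempty : forall t, exists a, post t a = true.
Hypothesis post_injective :
  forall a t1 t2, post t1 a = true -> post t2 a = true -> t1 = t2.
Hypothesis m0_unproduced : forall a, m0 a = 0 \/ forall t, post t a = false.

Lemma no_backward_firing_at_m0 t m' :
  ~ fire (rpre pre post) (rpost pre post) (inr t) m0 m'.
Proof.
  intro Hf; destruct (post_nonempty t) as [a Ha].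
  pose proof (fire_pre_le _ _ _ _ _ _ _ a Hf Ha) as Hle.
  destruct (m0_unproduced a) as [H0 | Hnone].
  - lia.
  - rewrite Hnone in Ha; discriminate.
Qed.

Lemma backward_firing_forward_reachable m m' t :
  star (fstep pre post) m0 m ->
  fire (rpre pre post) (rpost pre post) (inr t) m m' ->
  star (fstep pre post) m0 m'.
Proof.
  rewrite star_rtn1_iff; intro Hreach; revert m' t.
  induction Hreach as [|m1 m [t1 Hfwd] Hreach1 IH]; intros m' t Hback.
  - exfalso; exact (no_backward_firing_at_m0 _ _ Hback).
  - destruct (classic (t = t1)) as [-> | Hne].
    + rewrite <- (fire_functional _ _ _ _ _ _ _ _ (fire_reverse _ _ _ _ _ _ _ Hfwd) Hback).
      apply star_rtn1_iff; exact Hreach1.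
    + assert (Hdisj : forall a, post t a = true -> post t1 a = false).
      { intros a Ha; destruct (post t1 a) eqn:Ht1; [|reflexivity].
        exfalso; exact (Hne (post_injective _ _ _ Ha Ht1)). }
      destruct (fire_commute _ _ _ _ (inl t1) (inr t) _ _ _ Hdisj Hfwd Hback)
        as [m2 [Hback2 Hfwd2]].
      apply star_snoc with m2; [exact (IH _ _ Hback2) | exists t1; exact Hfwd2].
Qed.

End Reversible.

Theorem mainTheorem11 (P T : Type) (pre post : T -> P -> bool) (m0 : P -> nat)
  (HO : occurrence_net pre post m0) :
  forall m : P -> nat,
    star (rstep pre post) m0 m <-> star (fstep pre post) m0 m.
Proof.
  destruct HO as [[_ Hpost] [_ [_ [Hm0 [Hinj _]]]]].
  assert (Hunproduced : forall a, m0 a = 0 \/ forall t, post t a = false).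
  { intro a; destruct (Hm0 a) as [[_ Hnone] | [H0 _]]; auto. }
  intro m; split.
  - apply star_closed; [apply star_refl |].
    intros m1 m2 Hreach [[t | t] Hfire].
    + apply star_snoc with m1; [exact Hreach | exists t; exact Hfire].
    + exact (backward_firing_forward_reachable _ _ _ _ _ Hpost Hinj Hunproduced
               _ _ _ Hreach Hfire).
  - apply star_mono; intros m1 m2 [t Hfire]; exists (inl t); exact Hfire.
Qed.
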